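(* For integers $a\ge 1$ and $n\ge 2$, the modified fan graph $\overline{Fan}_n$ satisfies $$t(\overline{Fan}_n)=a\,B_{n-1}(a).$$ In particular, for $a=1$, $t(Fan_n)=F_{2n}$, where $F_k$ is the $k$-th Fibonacci number.
   Context: $t(H)$ is the number of spanning trees of $H$. The modified fan graph $\overline{Fan}_n$ is obtained from the path graph $P_n$ with vertices $p_1,\dots,p_n$ by adding a new vertex $p$ and joining $p$ to each vertex $p_j$ of $P_n$ by $a\ge 1$ parallel edges; for $a=1$ it is the fan graph $Fan_n$. The Morgan–Voyce polynomials are defined by $B_0(x)=1$, $B_1(x)=x+2$, $B_n(x)=(x+2)B_{n-1}(x)-B_{n-2}(x)$ for $n\ge2$. Fibonacci numbers: $F_1=F_2=1$, $F_k=F_{k-1}+F_{k-2}$. *)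

From mathcomp Require Import all_boot all_order all_algebra.
Set Implicit Arguments. Unset Strict Implicit. Unset Printing Implicit Defensive.
Import GRing.Theory Num.Theory.

Section SpanningTrees.
Variables (V E : finType) (ends : E -> V * V).

Definition sub_adj (T : {set E}) : rel V :=
  fun x y => [exists e in T, (ends e == (x, y)) || (ends e == (y, x))].

Definition sub_connected (T : {set E}) : bool :=
  [forall x, [forall y, connect (sub_adj T) x y]].

(* (V, T) has no cycle: no edge of T has its endpoints joined in T minus it
   (this also excludes loops). *)
Definition sub_acyclic (T : {set E}) : bool :=
  [forall e in T, ~~ connect (sub_adj (T :\ e)) (ends e).1 (ends e).2].

Definition is_spanning_tree (T : {set E}) : bool :=
  sub_connected T && sub_acyclic T.

(* t(H): number of spanning trees (as edge sets; parallel edges distinct) *)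
Definition num_spanning_trees : nat := #|[set T : {set E} | is_spanning_tree T]|.
End SpanningTrees.

(* Modified fan graph: vertices 'I_n.+1, with 0 = p and i = p_i (1 <= i <= n).
   Edges: inl j (j < n-1) is the path edge p_{j+1} p_{j+2};
          inr (j, k) (j < n, k < a) is the k-th parallel edge p p_{j+1}. *)
Definition fan_E (a n : nat) : finType := ('I_n.-1 + 'I_n * 'I_a)%type.

Definition fan_ends (a n : nat) (e : fan_E a n) : 'I_n.+1 * 'I_n.+1 :=
  match e with
  | inl j => (inord j.+1, inord j.+2)
  | inr jk => (ord0, inord jk.1.+1)
  end.

Definition t_modfan (a n : nat) : nat := num_spanning_trees (@fan_ends a n).

(* Morgan-Voyce polynomials B_n evaluated at x *)
Fixpoint MV (n : nat) (x : int) : int :=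
  match n with
  | 0 => 1
  | 1 => x + 2
  | (m.+1 as k).+1 => (x + 2) * MV k x - MV m x
  end%R.

Fixpoint fib (n : nat) : nat :=
  match n with
  | 0 => 0
  | 1 => 1
  | (m.+1 as k).+1 => fib k + fib m
  end.

From HB Require Import structures.
From mathcomp Require Import all_boot all_order all_algebra.
From mathcomp Require Import zify ring.
Set Implicit Arguments. Unset Strict Implicit. Unset Printing Implicit Defensive.
Import GRing.Theory.

(* Scan the fan level by level, level m consisting of p_m, its a fan edges and
   the path edge p_(m-1) p_m.  Restricted to the levels <= m, an edge set that
   can still become a spanning tree is either a spanning tree of the prefix
   graph (state Tree) or a spanning forest with two trees, the second being a
   final block p_l .. p_m of the path (state Split); two fan edges at one level,
   a cycle, or a block that can no longer be reached all rule out a spanning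
   tree (state Dead).  The next state depends only on the current one, on
   whether the new path edge is kept and on how many new fan edges are kept, so
   the numbers x_m, y_m of edge sets in states Tree and Split satisfy, for
   m >= 1, x_(m+1) = (1 + a) x_m + a y_m and y_(m+1) = x_m + y_m, with x_1 = a
   and y_1 = 1.  This is solved by x_(k+1) = a B_k(a), y_(k+1) = B_k(a) - B_(k-1)(a),
   and B_k(1) = F_(2k+2) as both satisfy u_(k+2) = 3 u_(k+1) - u_k. *)

Section SubgraphConnectivity.
Variables (V E : finType) (ends : E -> V * V).
Implicit Types (S : {set E}) (e f : E) (x y : V).
Local Notation adj := (sub_adj ends).
Local Notation acyclic := (sub_acyclic ends).

Lemma sub_adj_sym S : symmetric (adj S).
Proof.
by move=> x y; apply/existsP/existsP => -[e /andP[eS He]]; exists e; rewrite eS orbC.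
Qed.

Lemma sub_connect_sym S x y : connect (adj S) x y = connect (adj S) y x.
Proof. exact/sym_connect_sym/sub_adj_sym. Qed.

Lemma sub_connect_edge S e : e \in S -> connect (adj S) (ends e).1 (ends e).2.
Proof.
move=> eS; apply/connect1/existsP; exists e.
by rewrite eS; case: (ends e) => x y; rewrite eqxx.
Qed.

Lemma sub_connectS S S' x y :
  S \subset S' -> connect (adj S) x y -> connect (adj S') x y.
Proof.
move=> sSS'; apply: connect_sub => u v /existsP[e /andP[eS He]].
by apply/connect1/existsP; exists e; rewrite (subsetP sSS') ?He.
Qed.

Lemma sub_connect_closed S (A : pred V) x y :
  {in S, forall e, A (ends e).1 = A (ends e).2} ->
  connect (adj S) x y -> A x = A y.
Proof.
move=> closedA /connectP[p + ->]; elim: p x => //= z p IH x /andP[xz /IH <-].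
case/existsP: xz => e /andP[/closedA + He].
by case: (ends e) He => u v /orP[]/eqP[-> ->].
Qed.

Lemma sub_connect_edge_closed S z :
  {in S, forall e, connect (adj S) z (ends e).1 = connect (adj S) z (ends e).2}.
Proof.
move=> e eS; have e12 := sub_connect_edge eS.
by apply/idP/idP => /connect_trans; apply; rewrite // sub_connect_sym.
Qed.

Lemma sub_connect_setU1 S e x y : connect (adj (e |: S)) x y ->
  connect (adj S) x y \/ connect (adj S) x (ends e).1 || connect (adj S) x (ends e).2.
Proof.
case: (eqVneq (connect (adj S) x (ends e).1) (connect (adj S) x (ends e).2)) => [same|differ].
  move=> /(sub_connect_closed (A := connect (adj S) x)) <-; first by left.
  by move=> g; rewrite in_setU1 => /orP[/eqP-> // | /sub_connect_edge_closed].
by right; move: differ; case: connect; case: connect.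
Qed.

Lemma sub_acyclic_setU1 S e : e \notin S ->
  ~~ connect (adj S) (ends e).1 (ends e).2 -> acyclic S -> acyclic (e |: S).
Proof.
move=> eS e12 /forall_inP acS; apply/forall_inP => f.
rewrite in_setU1 => /orP[/eqP-> | fS]; first by rewrite setU1K.
have -> : (e |: S) :\ f = e |: (S :\ f).
  have fe : f != e by apply: contraNneq eS => <-.
  by apply/setP => g; rewrite !inE; case: (eqVneq g e) => [->|]; rewrite 1?eq_sym ?fe.
apply/negP => C; have nf := acS f fS; have f12 := sub_connect_edge fS.
have [|f1e] := sub_connect_setU1 C; first exact/negP.
rewrite sub_connect_sym in C; have [|f2e] := sub_connect_setU1 C.
  by rewrite sub_connect_sym; apply/negP.
have inS x y : connect (adj (S :\ f)) x y -> connect (adj S) y x.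
  by rewrite sub_connect_sym; apply/sub_connectS/subD1set.
(* [f.1 ~ e.i] and [f.2 ~ e.j] avoiding [f]: if [i = j] they close a cycle with
   [f]; otherwise [f] joins the ends of [e] in [S]. *)
case/orP: f1e => f1e; case/orP: f2e => f2e.
- by move: nf; rewrite (connect_trans f1e) // sub_connect_sym.
- move: e12; rewrite (connect_trans (inS _ _ f1e) (connect_trans f12 _)) //.
  by rewrite sub_connect_sym inS.
- move: e12; rewrite (connect_trans (inS _ _ f2e)) //.
  by rewrite sub_connect_sym (connect_trans (inS _ _ f1e)).
- by move: nf; rewrite (connect_trans f1e) // sub_connect_sym.
Qed.

Lemma sub_acyclicN S S' e : e \in S -> S' \subset S :\ e ->
  connect (adj S') (ends e).1 (ends e).2 -> ~~ acyclic S.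
Proof.
move=> eS sS'S C; apply/forall_inPn; exists e => //.
by rewrite negbK (sub_connectS sS'S C).
Qed.

Lemma sub_connect_separated S (A : pred V) x y :
  {in S, forall e, A (ends e).1 = A (ends e).2} -> A x -> ~~ A y ->
  ~~ connect (adj S) x y.
Proof. by move=> closedA Ax; apply: contraNN => /(sub_connect_closed closedA) <-. Qed.

End SubgraphConnectivity.

Lemma cards_le1P (T : finType) (A : {set T}) :
  #|A| <= 1 -> A = set0 \/ exists2 x, x \in A & A = [set x].
Proof.
case: (set_0Vmem A) => [-> | [x xA] A_le1]; [by left | right; exists x => //].
by apply/esym/eqP; rewrite eqEcard sub1set xA cards1.
Qed.

Lemma sum_subset_setU (T : finType) (A B : {set T}) (F : {set T} -> {set T} -> nat) :
  [disjoint A & B] ->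
  \sum_(X : {set T} | X \subset A :|: B) F (X :&: A) (X :&: B) =
  \sum_(X : {set T} | X \subset A) \sum_(Y : {set T} | Y \subset B) F X Y.
Proof.
move=> dAB; rewrite pair_big_dep /=.
rewrite (reindex_onto (fun XY => XY.1 :|: XY.2) (fun X => (X :&: A, X :&: B))) /=; last first.
  by move=> X sX; rewrite -setIUr; apply/setIidPl.
apply: eq_big => [[X Y] | [X Y] /andP[_ /eqP[-> ->]] //] /=.
apply/idP/idP => [/andP[_ /eqP[<- <-]] | /andP[sXA sYB]]; first by rewrite !subsetIr.
have XB : X :&: B = set0 by apply/disjoint_setI0/(disjointWl sXA).
have YA : Y :&: A = set0 by apply/disjoint_setI0/(disjointWl sYB); rewrite disjoint_sym.
by rewrite setUSS //= !setIUl XB YA setU0 set0U (setIidPl sXA) (setIidPl sYB).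
Qed.

Lemma sum_subset_card01 (T : finType) (A : {set T}) (q : nat -> nat) :
  (forall k, 1 < k -> q k = 0) ->
  \sum_(Y : {set T} | Y \subset A) q #|Y| = q 0 + q 1 * #|A|.
Proof.
move=> q_gt1; transitivity
  (\sum_(Y : {set T} | Y \subset A) (q 0 * (#|Y| == 0) + q 1 * (#|Y| == 1))).
  by apply: eq_bigr => Y _; case: #|Y| => [|[|k]] /=; rewrite ?muln0 ?muln1 ?addn0 ?add0n // q_gt1.
have draws k : \sum_(Y : {set T} | Y \subset A) (#|Y| == k) = 'C(#|A|, k).
  rewrite -cards_draws -sum1_card [RHS]big_mkcond [LHS]big_mkcond /=; apply: eq_bigr => Y _.
  by rewrite inE; case: (Y \subset A); case: (#|Y| == k).
by rewrite big_split -!big_distrr /= !draws bin0 bin1 muln1.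
Qed.

Lemma sum_subset_card_le1 (T : finType) (A : {set T}) (g : bool -> nat) :
  #|A| <= 1 -> \sum_(Y : {set T} | Y \subset A) g (Y != set0) = g false + g true * #|A|.
Proof.
move=> A_le1; transitivity (\sum_(Y : {set T} | Y \subset A) (#|Y| <= 1) * g (#|Y| != 0)).
  by apply: eq_bigr => Y sYA; rewrite (leq_trans (subset_leq_card sYA)) // mul1n cards_eq0.
by rewrite (sum_subset_card01 _ (q := fun k => (k <= 1) * g (k != 0))) ?mul1n // => -[|[|k]].
Qed.

Inductive scan_state := Tree | Split | Dead.

Definition scan_state_eqb (s t : scan_state) : bool :=
  match s, t with Tree, Tree | Split, Split | Dead, Dead => true | _, _ => false end.

Lemma scan_state_eqP : Equality.axiom scan_state_eqb.
Proof. by case; case; constructor. Qed.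

HB.instance Definition _ := hasDecEq.Build scan_state scan_state_eqP.

Definition scan_step (s : scan_state) (path : bool) (fans : nat) : scan_state :=
  match s, path, fans with
  | Tree, false, 0 => Split
  | Tree, false, 1 | Tree, true, 0 | Split, true, 1 => Tree
  | Split, true, 0 => Split
  | _, _, _ => Dead
  end.

Lemma scan_step_fans_gt1 s path fans : 1 < fans -> scan_step s path fans = Dead.
Proof. by case: s; case: path; case: fans => [|[|]]. Qed.

Section FanGraph.
Variables a n : nat.
Local Notation V := 'I_n.+1.
Local Notation E := (fan_E a n).
Local Notation ends := (@fan_ends a n).
Local Notation adj := (sub_adj ends).
Local Notation acyclic := (sub_acyclic ends).
Implicit Types (T S : {set E}) (e f p : E) (x y : V).

Definition is_fan_edge e : bool := if e is inr _ then true else false.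

Definition level e : nat := match e with inl j => j.+2 | inr jk => jk.1.+1 end.

Definition edges_upto m := [set e | level e <= m].
Definition fan_edges m := [set e | is_fan_edge e && (level e == m)].
Definition path_edges m := [set e | ~~ is_fan_edge e && (level e == m)].

Lemma level_gt0 e : 0 < level e.
Proof. by case: e. Qed.

Lemma level_le e : level e <= n.
Proof. by case: e => [j|[j k]] /=; have := ltn_ord j; lia. Qed.

Lemma fan_ends_snd e : (ends e).2 = level e :> nat.
Proof. by case: e => [j|[j k]] /=; rewrite inordK //; have := ltn_ord j; lia. Qed.

Lemma fan_ends_fst e : (ends e).1 = (if is_fan_edge e then 0 else (level e).-1) :> nat.
Proof. by case: e => [j|[j k]] //=; rewrite inordK //; have := ltn_ord j; lia. Qed.

Lemma fan_ends_fst_lt e : (ends e).1 < level e.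
Proof. by rewrite fan_ends_fst; case: e. Qed.

Lemma path_edgesP m p :
  p \in path_edges m -> (ends p).1 = m.-1 :> nat /\ (ends p).2 = m :> nat.
Proof. by rewrite inE fan_ends_fst fan_ends_snd => /andP[/negbTE-> /eqP ->]. Qed.

Lemma card_fan_edges m : m < n -> #|fan_edges m.+1| = a.
Proof.
move=> lt_mn; have -> : fan_edges m.+1 = [set inr (Ordinal lt_mn, k) | k : 'I_a].
  apply/setP => -[j|[j k]]; rewrite !inE /=; first by apply/esym/imsetP => -[].
  apply/eqP/imsetP => [[ej]|[k' _ [-> _]] //]; exists k => //.
  by congr (inr (_, _)); apply: val_inj.
by rewrite card_imset ?card_ord // => k1 k2 [].
Qed.

Lemma card_path_edges m : m < n -> #|path_edges m.+1| = (0 < m).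
Proof.
move=> lt_mn; case: m lt_mn => [|m] lt_mn.
  by rewrite (_ : path_edges 1 = set0) ?cards0 //; apply/setP => -[j|jk]; rewrite !inE.
have lt_mn' : m < n.-1 by lia.
have -> : path_edges m.+2 = [set inl (Ordinal lt_mn')].
  apply/setP => -[j|[j k]]; rewrite !inE //=; apply/eqP/eqP => [ej|[->] //].
by rewrite cards1.
Qed.

Lemma fan_edges_level m f : f \in fan_edges m -> level f = m.
Proof. by rewrite inE => /andP[_ /eqP]. Qed.

Lemma path_edges_level m p : p \in path_edges m -> level p = m.
Proof. by rewrite inE => /andP[_ /eqP]. Qed.

Lemma fan_edges_ends m f : f \in fan_edges m -> ends f = (ord0, inord m).
Proof. by case: f => [j|[j k]]; rewrite inE //= => /eqP <-. Qed.

Lemma fan_edgesP m f : f \in fan_edges m -> (ends f).1 = ord0 /\ (ends f).2 = m :> nat.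
Proof.
move=> fF; rewrite (fan_edges_ends fF) /= inordK //.
by rewrite ltnS -(fan_edges_level fF) level_le.
Qed.

Definition prefix T m := T :&: edges_upto m.

Lemma prefix_succ T m : prefix T m.+1 =
  (T :&: fan_edges m.+1) :|: ((T :&: path_edges m.+1) :|: prefix T m).
Proof.
apply/setP => e; rewrite !inE leq_eqVlt ltnS.
by case: (e \in T); case: is_fan_edge; case: (level e == m.+1).
Qed.

Lemma prefix_ends T m e : e \in prefix T m -> (ends e).1 < m /\ (ends e).2 <= m.
Proof.
rewrite !inE => /andP[_ le_em].
by have := fan_ends_fst_lt e; have := fan_ends_snd e; lia.
Qed.

Lemma prefix_isolated T m x y :
  connect (adj (prefix T m)) x y -> y = m.+1 :> nat -> x = y.
Proof.
move=> C ym; apply/eqP; rewrite -[x == y]/(pred1 y x) (sub_connect_closed _ C) /= ?eqxx //.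
by move=> e /prefix_ends[]; rewrite -!(inj_eq val_inj) /= ym; lia.
Qed.

Lemma acyclic_prefix_setU1 T m e : level e = m.+1 ->
  acyclic (prefix T m) -> acyclic (e |: prefix T m).
Proof.
move=> em; apply: sub_acyclic_setU1; first by rewrite !inE em ltnn andbF.
have e2 : (ends e).2 = m.+1 :> nat by rewrite fan_ends_snd.
apply/negP => /prefix_isolated/(_ e2) e12.
by have := fan_ends_fst_lt e; rewrite e12 fan_ends_snd ltnn.
Qed.

Definition tree_upto S m :=
  acyclic S /\ forall x : V, x <= m -> connect (adj S) ord0 x.

(* [S] is a spanning forest of the prefix graph on [0..m] with two trees:
   one containing [0] and the vertices below [l], the other the block [l..m]. *)
Definition split_upto S m := acyclic S /\ exists l, [/\ 0 < l <= m,
  forall x : V, x < l -> connect (adj S) ord0 x,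
  forall x y : V, l <= x <= m -> l <= y <= m -> connect (adj S) x y &
  {in S, forall e, (l <= (ends e).1 <= m) = (l <= (ends e).2 <= m)}].

Lemma tree_upto_leaf T m e : level e = m.+1 ->
  tree_upto (prefix T m) m -> tree_upto (e |: prefix T m) m.+1.
Proof.
move=> em [acT conT]; split; first exact: acyclic_prefix_setU1.
move=> x; rewrite leq_eqVlt ltnS => /orP[/eqP xm | le_xm].
  have -> : x = (ends e).2 by apply: val_inj; rewrite /= fan_ends_snd em.
  apply: connect_trans _ (sub_connect_edge ends (setU11 _ _)).
  apply: sub_connectS (subsetUr _ _) (conT _ _).
  by have := fan_ends_fst_lt e; rewrite em.
exact: sub_connectS (subsetUr _ _) (conT x le_xm).
Qed.

Lemma split_upto_new_block T m :
  tree_upto (prefix T m) m -> split_upto (prefix T m) m.+1.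
Proof.
move=> [acT conT]; split=> //; exists m.+1; split.
- by rewrite /= leqnn.
- exact: conT.
- by move=> x y xm ym; rewrite (_ : x = y) //; apply: ord_inj; lia.
- move=> e /setIP[_]; rewrite inE => le_em.
  by have := fan_ends_fst_lt e; have := fan_ends_snd e; lia.
Qed.

Lemma split_upto_extend T m p : p \in path_edges m.+1 ->
  split_upto (prefix T m) m -> split_upto (p |: prefix T m) m.+1.
Proof.
move=> pP [acT [l [lm con0 conB closedB]]]; have [p1 p2] := path_edgesP pP.
have toTop (z : V) : l <= z <= m.+1 -> connect (adj (p |: prefix T m)) z (ends p).2.
  move=> lz; case: (eqVneq (z : nat) m.+1) => zm.
    by rewrite (_ : z = (ends p).2) //; apply: ord_inj; rewrite p2.
  apply: connect_trans _ (sub_connect_edge ends (setU11 _ _)).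
  by apply: sub_connectS (subsetUr _ _) (conB _ _ _ _); rewrite ?p1; lia.
split; first by apply: acyclic_prefix_setU1 acT; rewrite -fan_ends_snd p2.
exists l; split.
- lia.
- by move=> x xl; apply: sub_connectS (subsetUr _ _) (con0 x xl).
- by move=> x y xl yl; rewrite (connect_trans (toTop x xl)) // sub_connect_sym toTop.
- move=> e; rewrite in_setU1 => /orP[/eqP-> | eT]; first by rewrite p1 p2; lia.
  by have := closedB e eT; have [] := prefix_ends eT; lia.
Qed.

Lemma tree_upto_join S k f : f \notin S -> f \in fan_edges k ->
  split_upto S k -> tree_upto (f |: S) k.
Proof.
move=> fS fF [acS [l [lk con0 conB closedB]]]; have [f1 f2] := fan_edgesP fF.
split.
  apply: sub_acyclic_setU1 fS _ acS; rewrite sub_connect_sym.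
  apply: (sub_connect_separated (A := fun z : V => l <= z <= k)) closedB _ _;
  by rewrite /= ?f1 ?f2 -?[nat_of_ord ord0]/0; lia.
move=> x xk; case: (ltnP x l) => [xl | lx].
  exact: sub_connectS (subsetUr _ _) (con0 x xl).
rewrite -f1; apply: connect_trans (sub_connect_edge ends (setU11 _ _)) _.
by apply: sub_connectS (subsetUr _ _) (conB _ _ _ _); rewrite ?f2; lia.
Qed.

Lemma tree_upto_fan_cycle T S k f : f \in T -> f \in fan_edges k ->
  S \subset T :\ f -> tree_upto S k -> ~~ acyclic T.
Proof.
move=> fT fF sST [_ conS]; apply: sub_acyclicN fT sST _.
by have [-> f2] := fan_edgesP fF; apply: conS; rewrite f2.
Qed.

Lemma block_not_sub_connected S l k : 0 < l <= k -> k <= n ->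
  {in S, forall e, (l <= (ends e).1 <= k) = (l <= (ends e).2 <= k)} ->
  ~~ sub_connected ends S.
Proof.
move=> lk kn closedB; apply/negP => /forallP/(_ ord0)/forallP/(_ (inord l)).
rewrite sub_connect_sym; apply/negP.
by apply: (sub_connect_separated (A := fun z : V => l <= z <= k)) closedB _ _;
  rewrite /= ?inordK; lia.
Qed.

Lemma split_upto_stuck T m : m < n -> T :&: path_edges m.+1 = set0 ->
  split_upto (prefix T m) m -> ~~ is_spanning_tree ends T.
Proof.
move=> lt_mn noP [_ [l [lm _ _ closedB]]].
rewrite negb_and; apply/orP; left; apply: (block_not_sub_connected lm) => [|e eT]; first lia.
have [le_em | lt_me] := leqP (level e) m; first by apply: closedB; rewrite !inE eT.
have := fan_ends_snd e; have := fan_ends_fst e; case: ifP => fe; first lia.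
have : e \notin T :&: path_edges m.+1 by rewrite noP inE.
by rewrite !inE eT fe /=; lia.
Qed.

Fixpoint scan m T : scan_state :=
  if m is k.+1 then
    scan_step (scan k T) (T :&: path_edges k.+1 != set0) #|T :&: fan_edges k.+1|
  else Tree.

Definition scan_invariant T m : Prop :=
  match scan m T with
  | Tree => tree_upto (prefix T m) m
  | Split => split_upto (prefix T m) m
  | Dead => ~~ is_spanning_tree ends T
  end.

Lemma spanning_fans_le1 T k : is_spanning_tree ends T -> #|T :&: fan_edges k| <= 1.
Proof.
case/andP=> _; apply: contraTT; rewrite -ltnNge.
case/card_gt1P=> f1 [f2 [/setIP[f1T f1F] /setIP[f2T f2F] ne]].
apply: (sub_acyclicN (S' := [set f1])) f2T _ _.
  by rewrite sub1set !inE ne f1T.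
have <- : ends f1 = ends f2 by rewrite (fan_edges_ends f1F) (fan_edges_ends f2F).
by apply: sub_connect_edge; rewrite set11.
Qed.

Lemma scan_invariant_succ T m : m < n -> scan_invariant T m -> scan_invariant T m.+1.
Proof.
move=> lt_mn; rewrite /scan_invariant /= prefix_succ.
have [F_gt1 | F_le1] := ltnP 1 #|T :&: fan_edges m.+1|.
  rewrite scan_step_fans_gt1 // => _; apply: contraTN F_gt1.
  by rewrite -leqNgt; apply: spanning_fans_le1.
have P_le1 : #|T :&: path_edges m.+1| <= 1.
  by rewrite (leq_trans (subset_leq_card (subsetIr _ _))) // card_path_edges // leq_b1.
have fan_notin f p : f \in fan_edges m.+1 -> p \in path_edges m.+1 ->
    f \notin p |: prefix T m.
  move=> fF pP; rewrite !inE (fan_edges_level fF) ltnn andbF orbF.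
  by apply: contraTneq pP => <-; move: fF; rewrite !inE => /andP[-> _].
case: (cards_le1P F_le1) => [F0 | [f /setIP[fT fF] F1]];
case: (cards_le1P P_le1) => [P0 | [p /setIP[pT pP] P1]];
rewrite ?F0 ?F1 ?P0 ?P1 ?cards0 ?cards1 ?eqxx -?cards_eq0 ?cards1 ?set0U /=;
case: (scan m T) => /= inv //.
- exact: split_upto_new_block.
- exact: split_upto_stuck lt_mn P0 inv.
- exact: tree_upto_leaf (path_edges_level pP) inv.
- exact: split_upto_extend pP inv.
- exact: tree_upto_leaf (fan_edges_level fF) inv.
- exact: split_upto_stuck lt_mn P0 inv.
- apply/nandP; right.
  apply: (tree_upto_fan_cycle fT fF _ (tree_upto_leaf (path_edges_level pP) inv)).
  apply/subsetP => e eS; rewrite !inE (memPn (fan_notin _ _ fF pP) _ eS).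
  by move: eS; rewrite in_setU1 => /orP[/eqP-> | /setIP[]].
- exact: tree_upto_join (fan_notin _ _ fF pP) fF (split_upto_extend pP inv).
Qed.

Lemma scan_invariant_upto T m : m <= n -> scan_invariant T m.
Proof.
elim: m => [_ | m IHm lt_mn]; last exact/scan_invariant_succ/IHm/ltnW.
rewrite /scan_invariant /=.
have -> : prefix T 0 = set0.
  by apply/setP => e; rewrite !inE leqn0 (gtn_eqF (level_gt0 e)) andbF.
split; first by apply/forall_inP => e; rewrite inE.
by move=> x; rewrite leqn0 => /eqP x0; rewrite (_ : x = ord0) //; apply: ord_inj.
Qed.

Lemma prefix_all T : prefix T n = T.
Proof. by apply/setIidPl/subsetP => e _; rewrite inE level_le. Qed.

Lemma is_spanning_treeE T : is_spanning_tree ends T = (scan n T == Tree).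
Proof.
have := scan_invariant_upto T (leqnn n); rewrite /scan_invariant prefix_all.
case: (scan n T) => /=; last exact: negbTE.
- case=> acT conT; rewrite /is_spanning_tree acT andbT.
  apply/forallP => x; apply/forallP => y.
  rewrite (connect_trans _ (conT y (ltn_ord y))) // sub_connect_sym.
  exact: conT (ltn_ord x).
- case=> _ [l [ln _ _ closedB]]; apply/negbTE/nandP; left.
  exact: block_not_sub_connected ln (leqnn n) closedB.
Qed.

Lemma edges_upto_succ m :
  edges_upto m.+1 = edges_upto m :|: (fan_edges m.+1 :|: path_edges m.+1).
Proof.
apply/setP => e; rewrite !inE leq_eqVlt ltnS.
by case: is_fan_edge; case: (level e == m.+1); case: (level e <= m).
Qed.

Lemma disjoint_edges_upto_succ m :
  [disjoint edges_upto m & fan_edges m.+1 :|: path_edges m.+1].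
Proof.
rewrite -setI_eq0; apply/eqP/setP => e; rewrite !inE.
by case: (eqVneq (level e) m.+1) => [->|]; rewrite ?ltnn ?andbF.
Qed.

Lemma disjoint_fan_path_edges m : [disjoint fan_edges m & path_edges m].
Proof.
by rewrite -setI_eq0; apply/eqP/setP => e; rewrite !inE; case: is_fan_edge; rewrite ?andbF.
Qed.

Lemma scan_prefix_eq m T T' : prefix T m = prefix T' m -> scan m T = scan m T'.
Proof.
elim: m T T' => //= m IHm T T' eqTT'.
have eq_below (A : {set E}) : A \subset edges_upto m.+1 -> T :&: A = T' :&: A.
  by move=> sA; rewrite -(setIidPr sA) !setIA -/(prefix T _) -/(prefix T' _) eqTT'.
have sub_succ (A : {set E}) :
    A \subset fan_edges m.+1 :|: path_edges m.+1 -> A \subset edges_upto m.+1.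
  by move=> sA; rewrite edges_upto_succ subsetU // sA orbT.
rewrite (IHm T T') ?(eq_below (path_edges m.+1)) ?(eq_below (fan_edges m.+1)) //.
- by apply: sub_succ; rewrite subsetUl.
- by apply: sub_succ; rewrite subsetUr.
- by apply: eq_below; rewrite edges_upto_succ subsetUl.
Qed.

Definition count_scan m s := \sum_(X : {set E} | X \subset edges_upto m) (scan m X == s).

(* Number of choices of kept level-[m+1] edges leading from [t] to [s != Dead]:
   at most one of the [a] fan edges is kept, and level [m+1] has a path edge
   only when [m > 0]. *)
Definition transfer m (t s : scan_state) : nat :=
  (scan_step t false 0 == s) + (scan_step t true 0 == s) * (0 < m) +
  ((scan_step t false 1 == s) + (scan_step t true 1 == s) * (0 < m)) * a.

Lemma sum_scan m (g : scan_state -> nat) :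
  \sum_(X : {set E} | X \subset edges_upto m) g (scan m X) =
  g Tree * count_scan m Tree + g Split * count_scan m Split + g Dead * count_scan m Dead.
Proof.
rewrite /count_scan !big_distrr -!big_split; apply: eq_bigr => X _.
by case: scan; rewrite /= ?muln0 ?muln1 ?addn0 ?add0n.
Qed.

Lemma count_scan_succ m s : m < n -> s != Dead ->
  count_scan m.+1 s = \sum_(X : {set E} | X \subset edges_upto m) transfer m (scan m X) s.
Proof.
move=> lt_mn sD; set F := fan_edges m.+1; set P := path_edges m.+1.
have scan_succ X : scan m.+1 X = scan_step (scan m (X :&: edges_upto m))
    ((X :&: (F :|: P)) :&: P != set0) #|(X :&: (F :|: P)) :&: F|.
  rewrite /= -!setIA setUK [(F :|: P) :&: P]setIC setKU.
  by congr scan_step; apply: scan_prefix_eq; rewrite /prefix -setIA setIid.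
rewrite /count_scan edges_upto_succ; under eq_bigr => X _ do rewrite scan_succ.
rewrite (sum_subset_setU (fun X Y => scan_step (scan m X) (Y :&: P != set0) #|Y :&: F| == s));
  last exact: disjoint_edges_upto_succ.
apply: eq_bigr => X _; set t := scan m X.
rewrite (sum_subset_setU (fun Y1 Y2 => scan_step t (Y2 != set0) #|Y1| == s));
  last exact: disjoint_fan_path_edges.
have P_le1 : #|P| <= 1 by rewrite card_path_edges ?leq_b1.
under eq_bigr => Y1 _
  do rewrite (sum_subset_card_le1 (fun b => scan_step t b #|Y1| == s) P_le1).
rewrite (sum_subset_card01 _ (q := fun k =>
  (scan_step t false k == s) + (scan_step t true k == s) * #|P|)) => [|k k_gt1].
  by rewrite card_fan_edges // card_path_edges.
by rewrite !scan_step_fans_gt1 // eq_sym (negbTE sD).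
Qed.

Lemma count_tree_succ m : m < n ->
  count_scan m.+1 Tree =
  ((0 < m) + a) * count_scan m Tree + (0 < m) * a * count_scan m Split.
Proof.
by move=> lt_mn; rewrite count_scan_succ // (sum_scan m (transfer m ^~ _)) /transfer /=; lia.
Qed.

Lemma count_split_succ m : m < n ->
  count_scan m.+1 Split = count_scan m Tree + (0 < m) * count_scan m Split.
Proof.
by move=> lt_mn; rewrite count_scan_succ // (sum_scan m (transfer m ^~ _)) /transfer /=; lia.
Qed.

Lemma count_scan0 s : count_scan 0 s = (Tree == s).
Proof.
rewrite /count_scan (_ : edges_upto 0 = set0); last first.
  by apply/setP => e; rewrite !inE leqn0 (gtn_eqF (level_gt0 e)).
by rewrite (eq_bigl (pred1 set0)) ?big_pred1_eq // => X; rewrite subset0.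
Qed.

Lemma t_modfan_count : t_modfan a n = count_scan n Tree.
Proof.
rewrite /t_modfan /num_spanning_trees /count_scan -sum1_card.
rewrite [LHS]big_mkcond [RHS]big_mkcond; apply: eq_bigr => X _.
rewrite inE is_spanning_treeE (_ : X \subset _) //.
by apply/subsetP => e; rewrite inE level_le.
Qed.

End FanGraph.

Lemma MV_succ k (x : int) :
  MV k.+1 x = ((x + 2) * MV k x - (if k is k'.+1 then MV k' x else 0))%R.
Proof. by case: k => [|k] /=; rewrite ?mulr1 ?subr0. Qed.

Lemma count_scan_MV a n k : k < n ->
  ((count_scan a n k.+1 Tree)%:Z = a%:Z * MV k a%:Z)%R /\
  ((count_scan a n k.+1 Split)%:Z = MV k a%:Z - (if k is k'.+1 then MV k' a%:Z else 0))%R.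
Proof.
elim: k => [|k IHk] lt_kn.
  by rewrite count_tree_succ // count_split_succ // !count_scan0 /=; split; lia.
have [IHtree IHsplit] := IHk (ltnW lt_kn).
rewrite (count_tree_succ a lt_kn) (count_split_succ a lt_kn) ltn0Sn !mul1n.
by rewrite !PoszD !PoszM IHtree IHsplit MV_succ; split; ring.
Qed.

Lemma fib_add4 j : fib j.+4 + fib j = 3 * fib j.+2.
Proof.
have fib_succ i : fib i.+2 = fib i.+1 + fib i by [].
by rewrite !fib_succ; lia.
Qed.

Lemma MV1_fib k : (MV k 1%:Z = (fib (2 * k).+2)%:Z)%R.
Proof.
suff : (MV k 1%:Z = (fib (2 * k).+2)%:Z /\ MV k.+1 1%:Z = (fib (2 * k).+4)%:Z)%R by case.
elim: k => [|k [IHk IHk1]]; first by split.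
rewrite (_ : (2 * k.+1).+2 = (2 * k).+4); last lia.
split=> //; rewrite MV_succ IHk IHk1.
by have := fib_add4 (2 * k).+2; lia.
Qed.

Theorem theorem5p9 (a n : nat) :
  1 <= a -> 2 <= n ->
  ((t_modfan a n)%:Z = a%:Z * MV n.-1 a%:Z)%R /\
  (a = 1 -> t_modfan 1 n = fib (2 * n)).
Proof.
move=> _ n_ge2; have lt_pred_n : n.-1 < n by lia.
have t_MV b : ((t_modfan b n)%:Z = b%:Z * MV n.-1 b%:Z)%R.
  have [] := count_scan_MV b lt_pred_n.
  by rewrite prednK ?t_modfan_count //; lia.
split=> [|_]; first exact: t_MV.
by have := t_MV 1; rewrite MV1_fib (_ : (2 * n.-1).+2 = 2 * n); lia.
Qed.
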